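(* Let $p_k\ge0$ ($k\ge1$) with $\sum_k p_k=1$ and $Q_1=\sum_k kp_k<\infty$, let $Q(z)=\sum_k p_kz^k$, and for $q\in(0,1)$ define $\kappa(q)>0$ by $$-\log\kappa(q)=\int_0^{1-q}\Big(\frac{Q_1}{1-Q(z)}-\frac{1}{1-z}\Big)\,dz.$$ Then $\kappa$ is slowly varying at $0$: for every $\lambda>0$, $\kappa(\lambda q)/\kappa(q)\to1$ as $q\to0$. *)

From Stdlib Require Import Reals.
From Coquelicot Require Import Coquelicot.
Open Scope R_scope.

Definition Qgen (p : nat -> R) (z : R) : R := Series (fun k => p k * z ^ k).

Definition Qmean (p : nat -> R) : R := Series (fun k => INR k * p k).

Definition kappa_integrand (p : nat -> R) (z : R) : R :=
  Qmean p / (1 - Qgen p z) - 1 / (1 - z).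

Definition kappa (p : nat -> R) (q : R) : R :=
  exp (- RInt (kappa_integrand p) 0 (1 - q)).

(* With S(z) = 1 - Q(z) = sum_k p_k (1 - z^k), the bounds
   A_N (1 - N (1 - z)) <= S(z) / (1 - z) <= Q_1, where A_N = sum_(k <= N) k p_k,
   show that S(z) / (1 - z) tends to Q_1 as z -> 1-, hence that the integrand
   f = Q_1 / S - 1 / (1 - z) satisfies (1 - z) f(z) -> 0.  Therefore
   log (kappa(lambda q) / kappa(q)) = - int_(1-q)^(1-lambda q) f is bounded by
   the length |1 - lambda| q of the interval times o(1/q), so it tends to 0. *)
From Stdlib Require Import Reals Lra Lia.
From Coquelicot Require Import Coquelicot.
Open Scope R_scope.

Lemma Series_nonneg (a : nat -> R) :
  (forall n, 0 <= a n) -> ex_series a -> 0 <= Series a.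
Proof.
  intros Ha Hex.
  assert (H : Series (fun n => a n * 0) <= Series a)
    by (apply Series_le; auto; intros n; specialize (Ha n); lra).
  rewrite Series_scal_r, Rmult_0_r in H. exact H.
Qed.

Lemma sum_f_R0_le_Series (a : nat -> R) (N : nat) :
  (forall n, 0 <= a n) -> ex_series a -> sum_f_R0 a N <= Series a.
Proof.
  intros Ha Hex.
  rewrite (Series_incr_n a (S N)) by (lia || exact Hex); simpl pred.
  assert (0 <= Series (fun k => a (S N + k)%nat)).
  { apply Series_nonneg; [auto | apply (ex_series_incr_n a (S N)), Hex]. }
  lra.
Qed.

Lemma pow_between_0_1 (z : R) (k : nat) : 0 <= z <= 1 -> 0 <= z ^ k <= 1.
Proof. intros Hz. split; [apply pow_le; lra | rewrite <- (pow1 k); apply pow_incr; lra]. Qed.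

Lemma one_sub_lin_le_pow (z : R) (k : nat) :
  0 <= z <= 1 -> 1 - INR k * (1 - z) <= z ^ k.
Proof.
  intros Hz. induction k as [|k IH]; [simpl; lra|].
  rewrite S_INR; simpl.
  assert (0 <= INR k) by apply pos_INR.
  assert (z * (1 - INR k * (1 - z)) <= z * z ^ k) by (apply Rmult_le_compat_l; lra).
  assert (0 <= INR k * (1 - z) * (1 - z)) by (apply Rmult_le_pos; [apply Rmult_le_pos|]; lra).
  nra.
Qed.

Lemma lin_pow_le_one_sub_pow (z : R) (k : nat) :
  0 <= z <= 1 -> INR k * z ^ k * (1 - z) <= 1 - z ^ k.
Proof.
  intros Hz. induction k as [|k IH]; [simpl; lra|].
  rewrite S_INR; simpl.
  assert (0 <= INR k) by apply pos_INR.
  assert (0 <= z ^ k) by (apply pow_le; lra).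
  assert (0 <= INR k * z ^ k * (1 - z) * (1 - z)) by (apply Rmult_le_pos; [apply Rmult_le_pos; [apply Rmult_le_pos|]|]; lra).
  assert (0 <= z ^ k * (1 - z) * (1 - z)) by (apply Rmult_le_pos; [apply Rmult_le_pos|]; lra).
  nra.
Qed.

Lemma abs_RInt_le_const_between (f : R -> R) (a b M : R) :
  ex_RInt f a b -> (forall t, Rmin a b <= t <= Rmax a b -> Rabs (f t) <= M) ->
  Rabs (RInt f a b) <= Rabs (b - a) * M.
Proof.
  intros Hex HM. destruct (Rle_dec a b) as [Hab|Hab].
  - rewrite (Rabs_pos_eq (b - a)) by lra. apply abs_RInt_le_const; auto.
    intros t Ht. apply HM. rewrite Rmin_left, Rmax_right; lra.
  - rewrite <- (opp_RInt_swap f b a) by (apply ex_RInt_swap; auto).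
    change (Rabs (- RInt f b a) <= Rabs (b - a) * M).
    rewrite Rabs_Ropp, (Rabs_left (b - a)), Ropp_minus_distr by lra.
    apply abs_RInt_le_const; [lra | apply ex_RInt_swap; auto |].
    intros t Ht. apply HM. rewrite Rmin_right, Rmax_left; lra.
Qed.

Section NearSingularity.

Variable f : R -> R.
Hypothesis f_RInt : forall a b, 0 <= a < 1 -> 0 <= b < 1 -> ex_RInt f a b.
Hypothesis f_small : filterlim (fun z => (1 - z) * f z) (at_left 1) (locally 0).

Lemma RInt_shrinking_cvg_0 (lam : R) : 0 < lam ->
  filterlim (fun q => RInt f (1 - q) (1 - lam * q)) (at_right 0) (locally 0).
Proof.
  intros Hlam. apply (proj2 (filterlim_locally _ _)). intros eps.
  pose proof (cond_pos eps) as Heps.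
  set (m := Rmin 1 lam).
  assert (Hm : 0 < m) by (apply Rmin_glb_lt; lra).
  assert (Hm1 : m <= 1) by apply Rmin_l.
  assert (Hml : m <= lam) by apply Rmin_r.
  set (c := Rabs (1 - lam)).
  assert (Hc : 0 <= c) by apply Rabs_pos.
  set (e := eps * m / (c + 1)).
  assert (He : 0 < e) by (apply Rdiv_lt_0_compat; nra).
  destruct (proj1 (filterlim_locally _ _) f_small (mkposreal e He)) as [delta Hdelta].
  assert (Hr : 0 < Rmin delta 1 / (1 + lam)).
  { apply Rdiv_lt_0_compat; [apply Rmin_glb_lt; [apply cond_pos|]|]; lra. }
  exists (mkposreal _ Hr). intros q Hq Hq0.
  change (Rabs (q - 0) < Rmin delta 1 / (1 + lam)) in Hq.
  rewrite Rminus_0_r, Rabs_pos_eq in Hq by lra.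
  apply Rlt_div_r in Hq; [|lra].
  assert (Hqd : q * (1 + lam) < delta) by (pose proof (Rmin_l delta 1); nra).
  assert (Hq1 : q * (1 + lam) < 1) by (pose proof (Rmin_r delta 1); nra).
  change (Rabs (RInt f (1 - q) (1 - lam * q) - 0) < eps). rewrite Rminus_0_r.
  apply Rle_lt_trans with (Rabs ((1 - lam * q) - (1 - q)) * (e / (m * q))).
  - apply abs_RInt_le_const_between; [apply f_RInt; nra|].
    intros t Ht.
    assert (1 - delta < Rmin (1 - q) (1 - lam * q)) by (apply Rmin_glb_lt; nra).
    assert (Rmax (1 - q) (1 - lam * q) <= 1 - m * q) by (apply Rmax_lub; nra).
    assert (Hmq : 0 < m * q) by nra.
    assert (Hft : Rabs ((1 - t) * f t - 0) < e).
    { apply Hdelta; [|lra]. change (Rabs (t - 1) < delta). rewrite Rabs_left1; lra. }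
    rewrite Rminus_0_r, Rabs_mult, (Rabs_pos_eq (1 - t)) in Hft by lra.
    apply Rle_div_r; [nra|].
    apply Rle_trans with (Rabs (f t) * (1 - t)); [|lra].
    apply Rmult_le_compat_l; [apply Rabs_pos | lra].
  - replace (1 - lam * q - (1 - q)) with ((1 - lam) * q) by ring.
    rewrite Rabs_mult, (Rabs_pos_eq q) by lra. fold c.
    replace (c * q * (e / (m * q))) with (eps * (c / (c + 1))) by (unfold e; field; lra).
    assert (c / (c + 1) < 1) by (apply Rlt_div_l; lra).
    nra.
Qed.

Lemma exp_RInt_ratio_cvg_1 (lam : R) : 0 < lam ->
  filterlim (fun q => exp (- RInt f 0 (1 - lam * q)) / exp (- RInt f 0 (1 - q)))
    (at_right 0) (locally 1).
Proof.
  intros Hlam.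
  apply (filterlim_ext_loc (fun q => exp (- RInt f (1 - q) (1 - lam * q)))).
  - assert (Hr : 0 < 1 / (1 + lam)) by (apply Rdiv_lt_0_compat; lra).
    exists (mkposreal _ Hr). intros q Hq Hq0.
    change (Rabs (q - 0) < 1 / (1 + lam)) in Hq.
    rewrite Rminus_0_r, Rabs_pos_eq in Hq by lra.
    assert (Hq1 : q * (1 + lam) < 1).
    { apply Rlt_div_r in Hq; lra. }
    assert (Hchasles : RInt f 0 (1 - lam * q) = RInt f 0 (1 - q) + RInt f (1 - q) (1 - lam * q)).
    { symmetry. apply (RInt_Chasles (V := R_CompleteNormedModule)); apply f_RInt; nra. }
    rewrite Hchasles, Ropp_plus_distr, exp_plus. field. apply Rgt_not_eq, exp_pos.
  - apply (filterlim_comp _ _ _ _ (fun x => exp (- x)) _ (locally 0));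
      [apply RInt_shrinking_cvg_0; exact Hlam|].
    assert (Hcont : continuous (fun x => exp (- x)) 0).
    { apply (@ex_derive_continuous R_AbsRing R_NormedModule). auto_derive. auto. }
    unfold continuous in Hcont. rewrite Ropp_0, exp_0 in Hcont. exact Hcont.
Qed.

End NearSingularity.

Section GeneratingFunction.

Variable p : nat -> R.
Hypothesis p0 : p 0%nat = 0.
Hypothesis pnn : forall k, 0 <= p k.
Hypothesis psum : is_series p 1.
Hypothesis pmean : ex_series (fun k => INR k * p k).

Lemma Series_p : Series p = 1.
Proof. exact (is_series_unique _ _ psum). Qed.

Lemma ex_series_p : ex_series p.
Proof. exists 1; exact psum. Qed.

Lemma p_le_1 (n : nat) : p n <= 1.
Proof.
  rewrite <- Series_p.
  apply Rle_trans with (sum_f_R0 p n); [|apply sum_f_R0_le_Series; auto using ex_series_p].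
  destruct n as [|n]; simpl; [lra|].
  pose proof (cond_pos_sum p n pnn). lra.
Qed.

Lemma CV_radius_p (z : R) : 0 <= z < 1 -> Rbar_lt (Rabs z) (CV_radius p).
Proof.
  intros Hz.
  assert (H1 : Rbar_le 1 (CV_radius p)).
  { apply (proj1 (CV_radius_bounded p)). exists 1. intros n.
    rewrite pow1, Rmult_1_r, Rabs_pos_eq; auto using p_le_1. }
  rewrite Rabs_pos_eq by lra.
  destruct (CV_radius p); simpl in *; auto; lra.
Qed.

Lemma ex_series_p_mul (g : nat -> R) :
  (forall k, 0 <= g k <= 1) -> ex_series (fun k => p k * g k).
Proof.
  intros Hg. apply (@ex_series_le R_AbsRing R_CompleteNormedModule _ p); [|apply ex_series_p].
  intros n. change (Rabs (p n * g n) <= p n).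
  pose proof (pnn n). pose proof (Hg n). rewrite Rabs_pos_eq; nra.
Qed.

Lemma one_sub_Qgen (z : R) : 0 <= z <= 1 ->
  1 - Qgen p z = Series (fun k => p k * (1 - z ^ k)).
Proof.
  intros Hz. unfold Qgen.
  rewrite (Series_ext (fun k => p k * (1 - z ^ k)) (fun k => p k - p k * z ^ k)) by (intros; ring).
  rewrite Series_minus; [|apply ex_series_p | apply ex_series_p_mul; intros; apply pow_between_0_1, Hz].
  rewrite Series_p. reflexivity.
Qed.

Lemma Qgen_le (z : R) : 0 <= z <= 1 -> Qgen p z <= z.
Proof.
  intros Hz. unfold Qgen.
  apply Rle_trans with (Series (fun k => p k * z)).
  - apply Series_le; [|apply ex_series_scal_r, ex_series_p].
    intros [|k]; [rewrite p0; simpl; lra|].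
    pose proof (pnn (S k)). pose proof (pow_between_0_1 z k Hz).
    assert (z * z ^ k <= z) by nra.
    simpl. split; [apply Rmult_le_pos; nra | apply Rmult_le_compat_l; auto].
  - rewrite Series_scal_r, Series_p. lra.
Qed.

Lemma Qmean_ge_1 : 1 <= Qmean p.
Proof.
  unfold Qmean. rewrite <- Series_p. apply Series_le; auto.
  intros [|k]; [rewrite p0; simpl; lra|].
  rewrite S_INR. pose proof (pos_INR k). pose proof (pnn (S k)). nra.
Qed.

Lemma one_sub_Qgen_le (z : R) : 0 <= z <= 1 -> 1 - Qgen p z <= Qmean p * (1 - z).
Proof.
  intros Hz. rewrite one_sub_Qgen by exact Hz. unfold Qmean. rewrite <- Series_scal_r.
  apply Series_le; [|apply ex_series_scal_r, pmean].
  intros k. pose proof (pnn k). pose proof (pow_between_0_1 z k Hz). pose proof (one_sub_lin_le_pow z k Hz).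
  split; nra.
Qed.

Lemma one_sub_Qgen_ge (z : R) (N : nat) : 0 <= z <= 1 ->
  sum_f_R0 (fun k => INR k * p k) N * (1 - INR N * (1 - z)) * (1 - z) <= 1 - Qgen p z.
Proof.
  intros Hz. rewrite one_sub_Qgen by exact Hz.
  apply Rle_trans with (sum_f_R0 (fun k => p k * (1 - z ^ k)) N).
  2:{ assert (Hb : forall k, 0 <= 1 - z ^ k <= 1) by (intros k; pose proof (pow_between_0_1 z k Hz); lra).
      apply sum_f_R0_le_Series; [|apply ex_series_p_mul, Hb].
      intros k. pose proof (pnn k). pose proof (Hb k). nra. }
  rewrite Rmult_assoc, Rmult_comm, scal_sum.
  apply sum_Rle. intros k Hk.
  pose proof (pnn k). pose proof (lin_pow_le_one_sub_pow z k Hz).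
  pose proof (one_sub_lin_le_pow z k Hz). pose proof (le_INR _ _ Hk). pose proof (pos_INR k).
  assert (1 - INR N * (1 - z) <= z ^ k) by nra.
  assert (0 <= INR k * p k * (1 - z)) by (apply Rmult_le_pos; [apply Rmult_le_pos|]; lra).
  assert (INR k * p k * (1 - z) * (1 - INR N * (1 - z)) <= INR k * p k * (1 - z) * z ^ k)
    by (apply Rmult_le_compat_l; auto).
  nra.
Qed.

Lemma one_sub_Qgen_div_cvg :
  filterlim (fun z => (1 - Qgen p z) / (1 - z)) (at_left 1) (locally (Qmean p)).
Proof.
  apply (proj2 (filterlim_locally _ _)). intros eps.
  pose proof (cond_pos eps) as Heps.
  pose proof Qmean_ge_1 as HM.
  assert (Heps2 : 0 < eps / 2) by lra.
  destruct (proj1 (filterlim_locally _ _) (Series_correct _ pmean) (mkposreal _ Heps2))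
    as [N HN].
  specialize (HN N (le_n N)).
  change (Rabs (sum_n (fun k => INR k * p k) N - Qmean p) < eps / 2) in HN.
  rewrite sum_n_Reals in HN.
  set (A := sum_f_R0 (fun k => INR k * p k) N) in *.
  assert (HAM : A <= Qmean p).
  { apply sum_f_R0_le_Series; [|exact pmean].
    intros k. apply Rmult_le_pos; [apply pos_INR | apply pnn]. }
  pose proof (pos_INR N) as HN0.
  set (delta := Rmin 1 (eps / (2 * Qmean p * (INR N + 1)))).
  assert (Hdelta : 0 < delta).
  { apply Rmin_glb_lt; [lra|]. apply Rdiv_lt_0_compat; nra. }
  assert (Hdelta1 : delta <= 1) by apply Rmin_l.
  assert (Hdelta2 : delta * (2 * Qmean p * (INR N + 1)) <= eps)
    by (apply Rle_div_r; [nra | apply Rmin_r]).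
  exists (mkposreal _ Hdelta). intros z Hz Hz1.
  change (Rabs (z - 1) < delta) in Hz. rewrite Rabs_left in Hz by lra.
  assert (Hz01 : 0 <= z <= 1) by lra.
  assert (Hd : 0 < 1 - z < delta) by lra.
  change (Rabs ((1 - Qgen p z) / (1 - z) - Qmean p) < eps).
  set (d := 1 - z) in *.
  assert (Hup : (1 - Qgen p z) / d <= Qmean p).
  { apply Rle_div_l; [lra|]. apply one_sub_Qgen_le, Hz01. }
  assert (Hlow : A * (1 - INR N * d) <= (1 - Qgen p z) / d).
  { apply (Rle_div_r _ _ d); [lra|]. apply one_sub_Qgen_ge, Hz01. }
  assert (HNd : Qmean p * (INR N * d) <= eps / 2).
  { assert (Qmean p * (INR N + 1) * d <= Qmean p * (INR N + 1) * delta)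
      by (apply Rmult_le_compat_l; nra).
    nra. }
  assert (A * (INR N * d) <= Qmean p * (INR N * d)) by (apply Rmult_le_compat_r; nra).
  apply Rabs_lt_between'. apply Rabs_lt_between' in HN. lra.
Qed.

Lemma kappa_integrand_mul_cvg_0 :
  filterlim (fun z => (1 - z) * kappa_integrand p z) (at_left 1) (locally 0).
Proof.
  pose proof Qmean_ge_1 as HM.
  apply (filterlim_ext_loc (fun z => Qmean p / ((1 - Qgen p z) / (1 - z)) - 1)).
  { exists (mkposreal _ Rlt_0_1). intros z _ Hz.
    unfold kappa_integrand, Rdiv.
    rewrite Rinv_mult, Rinv_inv. set (u := / (1 - Qgen p z)). field. lra. }
  apply (filterlim_comp _ _ _ _ (fun x => Qmean p / x - 1) _ (locally (Qmean p)));
    [exact one_sub_Qgen_div_cvg|].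
  assert (Hcont : continuous (fun x => Qmean p / x - 1) (Qmean p)).
  { apply (@ex_derive_continuous R_AbsRing R_NormedModule). auto_derive. lra. }
  unfold continuous in Hcont. replace (Qmean p / Qmean p - 1) with 0 in Hcont by (field; lra).
  exact Hcont.
Qed.

Lemma kappa_integrand_continuous (z : R) : 0 <= z < 1 -> continuous (kappa_integrand p) z.
Proof.
  intros Hz. apply (@ex_derive_continuous R_AbsRing R_NormedModule).
  assert (HQ : Qgen p z <= z) by (apply Qgen_le; lra).
  assert (ex_derive (Qgen p) z) by (apply ex_derive_PSeries, CV_radius_p, Hz).
  unfold kappa_integrand. auto_derive. repeat split; auto; lra.
Qed.

Lemma ex_RInt_kappa_integrand (a b : R) :
  0 <= a < 1 -> 0 <= b < 1 -> ex_RInt (kappa_integrand p) a b.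
Proof.
  intros Ha Hb. apply (@ex_RInt_continuous R_CompleteNormedModule).
  intros z Hz. apply kappa_integrand_continuous.
  pose proof (Rmin_glb a b 0 (proj1 Ha) (proj1 Hb)).
  pose proof (Rmax_lub_lt a b 1 (proj2 Ha) (proj2 Hb)).
  lra.
Qed.

End GeneratingFunction.

Theorem lemma3p8 (p : nat -> R)
  (p0 : p 0%nat = 0)
  (pnn : forall k, 0 <= p k)
  (psum : is_series p 1)
  (pmean : ex_series (fun k => INR k * p k))
  (lambda : R) (hlambda : 0 < lambda) :
  filterlim (fun q => kappa p (lambda * q) / kappa p q) (at_right 0) (locally 1).
Proof.
  apply exp_RInt_ratio_cvg_1; [| apply kappa_integrand_mul_cvg_0 | exact hlambda];
    auto using ex_RInt_kappa_integrand.
Qed.
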